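(* For any finite simple graph $G$, $|\operatorname{nucleus}(G)| + |\operatorname{diadem}(G)| \le 2\alpha(G)$.
   Context: For $X\subseteq V(G)$, $N(X)$ is the set of vertices adjacent to some vertex of $X$, and $d(X)=|X|-|N(X)|$. A set is independent if no two of its vertices are adjacent. An independent set $S$ is critical if $d(S)=\max\{d(X):X\subseteq V(G)\}$; the empty set may be critical. A maximum critical independent set is a critical independent set of maximum cardinality. $\operatorname{nucleus}(G)$ and $\operatorname{diadem}(G)$ are, respectively, the intersection and the union of all maximum critical independent sets of $G$. $\alpha(G)$ is the independence number. *)

From mathcomp Require Import all_boot all_order all_algebra.
Set Implicit Arguments. Unset Strict Implicit. Unset Printing Implicit Defensive.
Import GRing.Theory Num.Theory.

Section Graph.
Variables (T : finType) (e : rel T).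

Definition nbhd (X : {set T}) : {set T} := [set y | [exists x in X, e x y]].

Definition dif (X : {set T}) : int := (#|X|%:Z - #|nbhd X|%:Z)%R.

Definition independent (S : {set T}) : bool :=
  [forall x in S, forall y in S, ~~ e x y].

Definition critical_difference : int :=
  \big[Order.max/dif set0]_(X : {set T}) dif X.

Definition critical_independent (S : {set T}) : bool :=
  independent S && (dif S == critical_difference).

Definition max_crit_card : nat :=
  \max_(S : {set T} | critical_independent S) #|S|.

Definition maximum_critical_independent (S : {set T}) : bool :=
  critical_independent S && (#|S| == max_crit_card).

Definition nucleus : {set T} :=
  \bigcap_(S | maximum_critical_independent S) S.

Definition diadem : {set T} :=
  \bigcup_(S | maximum_critical_independent S) S.

Definition alpha : nat := \max_(S : {set T} | independent S) #|S|.

End Graph.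

From mathcomp Require Import all_boot all_order all_algebra.
From mathcomp Require Import zify.
Set Implicit Arguments. Unset Strict Implicit. Unset Printing Implicit Defensive.
Import Order.TTheory GRing.Theory Num.Theory.

(* Fix a maximum critical independent set S, so that nucleus <= S <= diadem.
   For any other maximum critical independent set B, supermodularity of d shows
   that (S u B) \ (B n N(S)) is again critical independent; it contains S, so by
   maximality of S we get B \ S <= N(S), while B misses N(nucleus) because B is
   independent and contains the nucleus.  Hence diadem \ S <= N(S) \ N(nucleus),
   and d(nucleus) <= d(S) gives |diadem| - |S| <= |N(S)| - |N(nucleus)|
   <= |S| - |nucleus|, i.e. |nucleus| + |diadem| <= 2|S| <= 2 alpha. *)

Section CriticalSets.
Variables (T : finType) (e : rel T).

Lemma nbhdP (X : {set T}) y :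
  reflect (exists2 x, x \in X & e x y) (y \in nbhd e X).
Proof. by rewrite inE; apply: (iffP exists_inP) => -[x]; exists x. Qed.

Lemma nbhdS (A B : {set T}) : A \subset B -> nbhd e A \subset nbhd e B.
Proof.
move=> /subsetP sAB; apply/subsetP => y /nbhdP [x xA exy].
by apply/nbhdP; exists x; first exact: sAB.
Qed.

Lemma nbhdU (A B : {set T}) : nbhd e (A :|: B) = nbhd e A :|: nbhd e B.
Proof.
apply/setP => y; apply/nbhdP/setUP => [[x /setUP [xA|xB] exy]|[]].
- by left; apply/nbhdP; exists x.
- by right; apply/nbhdP; exists x.
- by case/nbhdP => x xA exy; exists x; rewrite ?inE ?xA.
- by case/nbhdP => x xB exy; exists x; rewrite ?inE ?xB ?orbT.
Qed.

Lemma independentP (S : {set T}) :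
  reflect {in S &, forall x y, ~~ e x y} (independent e S).
Proof.
apply: (iffP forall_inP) => [indS x y xS | indS x xS].
  exact: (forall_inP (indS x xS)).
by apply/forall_inP => y; apply: indS.
Qed.

Lemma leq_alpha (S : {set T}) : independent e S -> #|S| <= alpha e.
Proof. exact: leq_bigmax_cond. Qed.

Lemma leq_max_crit_card (S : {set T}) :
  critical_independent e S -> #|S| <= max_crit_card e.
Proof. exact: leq_bigmax_cond. Qed.

Lemma dif_le_critical (X : {set T}) : (dif e X <= critical_difference e)%R.
Proof.
rewrite /critical_difference; elim: (index_enum _) (mem_index_enum X) => // Y r IH.
by rewrite inE big_cons le_max => /orP [/eqP <-|/IH ->]; rewrite ?lexx ?orbT.
Qed.

Lemma critical_difference_attained : exists X, critical_difference e = dif e X.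
Proof.
apply: (big_ind (fun d => exists X, d = dif e X)); first by exists set0.
- by move=> _ _ [X ->] [Y ->]; case: leP => _; [exists Y | exists X].
- by move=> X _; exists X.
Qed.

(* Removing A from X loses |A| vertices but also the neighbours Z that are no
   longer reached, so d drops by at most |A| - |Z|. *)
Lemma dif_setD_ge (X A Z : {set T}) :
  A \subset X -> Z \subset nbhd e X -> [disjoint nbhd e (X :\: A) & Z] ->
  (dif e X - #|A|%:Z + #|Z|%:Z <= dif e (X :\: A))%R.
Proof.
move=> sAX sZN disZ.
have cardX : #|A| + #|X :\: A| = #|X| by rewrite -(cardsID A X) (setIidPr sAX).
have cardN : #|nbhd e (X :\: A)| + #|Z| <= #|nbhd e X|.
  rewrite -cardsUI (disjoint_setI0 disZ) cards0 addn0 subset_leq_card //.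
  by rewrite subUset sZN nbhdS ?subsetDl.
rewrite /dif; lia.
Qed.

Lemma dif_supermodular (A B : {set T}) :
  (dif e A + dif e B <= dif e (A :|: B) + dif e (A :&: B))%R.
Proof.
have cardAB := cardsUI A B.
have cardN : #|nbhd e (A :|: B)| + #|nbhd e (A :&: B)| <= #|nbhd e A| + #|nbhd e B|.
  rewrite nbhdU -(cardsUI (nbhd e A)) leq_add2l subset_leq_card //.
  by rewrite subsetI !nbhdS ?subsetIl ?subsetIr.
rewrite /dif; lia.
Qed.

Hypothesis e_sym : symmetric e.

Lemma independent_setD_nbhd (X : {set T}) : independent e (X :\: nbhd e X).
Proof.
apply/independentP => x y /setDP [xX _] /setDP [_ yN]; apply/negP => exy.
by case/negP: yN; apply/nbhdP; exists x.
Qed.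

Lemma critical_independent_exists : exists S, critical_independent e S.
Proof.
have [X dX] := critical_difference_attained.
exists (X :\: nbhd e X); rewrite /critical_independent independent_setD_nbhd.
have disN : [disjoint nbhd e (X :\: X :&: nbhd e X) & X :&: nbhd e X].
  rewrite disjoints_subset; apply/subsetP => y /nbhdP [x /setDP [xX xN] exy].
  rewrite in_setC in_setI; apply/negP => /andP [yX _].
  by case/negP: xN; rewrite in_setI xX; apply/nbhdP; exists y; rewrite // e_sym.
have := dif_setD_ge (subsetIl X (nbhd e X)) (subsetIr _ _) disN.
rewrite setDIr setDv set0U -dX subrK => leX.
by rewrite eq_le dif_le_critical leX.
Qed.

Lemma independent_union_setD (S B : {set T}) :
  independent e S -> independent e B ->
  independent e ((S :|: B) :\: (B :&: nbhd e S)).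
Proof.
move=> /independentP indS /independentP indB.
apply/independentP => x y /setDP [xSB xN] /setDP [ySB yN].
case/setUP: xSB => [xS|xB]; case/setUP: ySB => [yS|yB].
- exact: indS.
- by apply/negP => exy; case/negP: yN; rewrite in_setI yB; apply/nbhdP; exists x.
- apply/negP => exy; case/negP: xN; rewrite in_setI xB; apply/nbhdP.
  by exists y; rewrite // e_sym.
- exact: indB.
Qed.

Lemma disjoint_nbhd_union_setD (S B : {set T}) : independent e S ->
  [disjoint nbhd e ((S :|: B) :\: (B :&: nbhd e S)) & S :&: nbhd e B].
Proof.
move=> /independentP indS; rewrite disjoints_subset; apply/subsetP.
move=> y /nbhdP [t /setDP [tSB tN] ety]; rewrite in_setC in_setI.
apply/negP => /andP [yS _].
case/setUP: tSB => [tS|tB]; first by move: (indS t y tS yS); rewrite ety.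
by case/negP: tN; rewrite in_setI tB; apply/nbhdP; exists y; rewrite // e_sym.
Qed.

(* Since d(S u B) is maximal, the bounds of [dif_setD_ge] for removing B n N(S)
   and for removing S n N(B) add up to 2 d(S u B), so both removals stay critical. *)
Lemma critical_independent_union_setD (S B : {set T}) :
  critical_independent e S -> critical_independent e B ->
  critical_independent e ((S :|: B) :\: (B :&: nbhd e S)).
Proof.
move=> /andP [indS /eqP dS] /andP [indB /eqP dB].
rewrite /critical_independent independent_union_setD //=.
have dSB : (critical_difference e <= dif e (S :|: B))%R.
  by have := dif_supermodular S B; have := dif_le_critical (S :&: B); lia.
have sBX : B :&: nbhd e S \subset S :|: B by apply/subIset/orP; left; apply: subsetUr.
have sSX : S :&: nbhd e B \subset S :|: B by apply/subIset/orP; left; apply: subsetUl.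
have sBN : B :&: nbhd e S \subset nbhd e (S :|: B).
  by apply/subIset/orP; right; apply/nbhdS/subsetUl.
have sSN : S :&: nbhd e B \subset nbhd e (S :|: B).
  by apply/subIset/orP; right; apply/nbhdS/subsetUr.
have := dif_setD_ge sBX sSN (disjoint_nbhd_union_setD B indS).
have := disjoint_nbhd_union_setD S indB; rewrite setUC => /(dif_setD_ge sSX sBN).
have := dif_le_critical ((S :|: B) :\: (B :&: nbhd e S)).
have := dif_le_critical ((S :|: B) :\: (S :&: nbhd e B)).
by rewrite eq_le; lia.
Qed.

Lemma maximum_critical_independent_exists :
  exists S, maximum_critical_independent e S.
Proof.
have [S0 critS0] := critical_independent_exists.
case: (arg_maxnP (fun S : {set T} => #|S|) critS0) => S critS maxS; exists S.
by rewrite /maximum_critical_independent critS eqn_leq leq_max_crit_card //=;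
  apply/bigmax_leqP.
Qed.

Lemma maximum_critical_independent_setD_nbhd (S B : {set T}) :
  maximum_critical_independent e S -> maximum_critical_independent e B ->
  B :\: S \subset nbhd e S.
Proof.
move=> /andP [critS /eqP cardS] /andP [critB _]; apply/subsetP => v /setDP [vB vS].
apply: contraT => vN.
have sSU : v |: S \subset (S :|: B) :\: (B :&: nbhd e S).
  apply/subsetP => x /setU1P [->|xS]; rewrite in_setD in_setU in_setI.
    by rewrite vB (negbTE vN) andbF orbT.
  rewrite xS andbT; apply/negP => /andP [_ /nbhdP [s sS esx]].
  by case/andP: critS => /independentP indS _; move: (indS s x sS xS); rewrite esx.
have := leq_max_crit_card (critical_independent_union_setD critS critB).
by move: (subset_leq_card sSU); rewrite cardsU1 vS cardS; lia.
Qed.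

Lemma diadem_setD_sub (S : {set T}) : maximum_critical_independent e S ->
  diadem e :\: S \subset nbhd e S :\: nbhd e (nucleus e).
Proof.
move=> maxS; apply/subsetP => v /setDP [/bigcupP [B maxB vB] vS].
have vN := subsetP (maximum_critical_independent_setD_nbhd maxS maxB) v.
rewrite in_setD vN ?in_setD ?vB ?vS // andbT.
apply/negP => /nbhdP [x /bigcapP /(_ B maxB) xB exv].
by case/andP: maxB => /andP [/independentP indB _] _; move: (indB x v xB vB); rewrite exv.
Qed.

End CriticalSets.

Theorem theorem1p7 (T : finType) (e : rel T)
  (e_sym : symmetric e) (e_irr : irreflexive e) :
  #|nucleus e| + #|diadem e| <= 2 * alpha e.
Proof.
have [S maxS] := maximum_critical_independent_exists e_sym.
have sKS : nucleus e \subset S by apply: bigcap_inf maxS.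
have sSD : S \subset diadem e by apply: bigcup_sup maxS.
have := subset_leq_card (diadem_setD_sub e_sym maxS).
rewrite cardsD (setIidPr sSD) cardsD (setIidPr (nbhdS e sKS)).
have := subset_leq_card sSD; have := subset_leq_card (nbhdS e sKS).
have := subset_leq_card sKS; have := dif_le_critical e (nucleus e).
case/andP: maxS => /andP [/leq_alpha leS /eqP <-] _.
rewrite /dif; lia.
Qed.
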